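(* For an odd integer $n>1$ and an integer $m\geq 3$, $$\chi_{ld}(P_{m}[\overline{K_{n}}])\leq \begin{cases}4 &\text{if } m\equiv 1 \pmod 4,\\ 3 &\text{if } m\equiv 3 \pmod 4,\\ 4 &\text{if $m$ is even.}\end{cases}$$
   Context: All graphs are finite, simple and undirected. For a graph $G=(V,E)$ of order $N$ without isolated vertices, a bijection $f\colon V\to\{1,2,\dots,N\}$ is a local distance antimagic labeling if $w(u)\neq w(v)$ for every edge $uv$, where $w(u)=\sum_{x\in N(u)}f(x)$ and $N(u)$ is the open neighborhood of $u$. $\chi_{ld}(G)$ is the minimum number of distinct weights over all local distance antimagic labelings of $G$. $P_m$ is the path on $m$ vertices, $\overline{K_n}$ the edgeless graph on $n$ vertices. The lexicographic product $G[H]$ has vertex set $V(G)\times V(H)$, with $(g,h)$ adjacent to $(g',h')$ iff $gg'\in E(G)$, or $g=g'$ and $hh'\in E(H)$. *)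

From mathcomp Require Import all_boot.
Set Implicit Arguments.
Unset Strict Implicit.
Unset Printing Implicit Defensive.

(* A simple graph is a symmetric irreflexive relation e on a finType. *)

Definition path_rel (m : nat) : rel 'I_m :=
  fun i j => (i.+1 == j :> nat) || (j.+1 == i :> nat).

Definition edgeless_rel (n : nat) : rel 'I_n := fun _ _ => false.

Definition lexprod (T1 T2 : finType) (e1 : rel T1) (e2 : rel T2) : rel (T1 * T2) :=
  fun x y => e1 x.1 y.1 || ((x.1 == y.1) && e2 x.2 y.2).

(* A labeling f : V -> 'I_N represents the labels (f x).+1 in {1,...,N}. *)
Definition label (T : finType) (f : {ffun T -> 'I_#|T|}) (x : T) : nat :=
  (f x).+1.

Definition weight (T : finType) (e : rel T) (f : {ffun T -> 'I_#|T|}) (u : T) : nat :=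
  \sum_(x | e u x) label f x.

Definition is_ldal (T : finType) (e : rel T) (f : {ffun T -> 'I_#|T|}) : bool :=
  injectiveb f && [forall u, forall v, e u v ==> (weight e f u != weight e f v)].

Definition num_weights (T : finType) (e : rel T) (f : {ffun T -> 'I_#|T|}) : nat :=
  size (undup [seq weight e f u | u <- enum T]).

(* chi_ld: minimum number of distinct weights over all local distance
   antimagic labelings (default #|T|.+1 if none exists, so that an upper
   bound chi_ld <= k with k <= #|T| entails existence). *)
Definition chi_ld (T : finType) (e : rel T) : nat :=
  \big[minn/#|T|.+1]_(f : {ffun T -> 'I_#|T|} | is_ldal e f) num_weights e f.
Arguments path_rel m : clear implicits.
Arguments edgeless_rel n : clear implicits.

From mathcomp Require Import all_boot order zify.

(* Write n = 2t + 3 and give the copy (i, j) of path vertex i in layer j the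
   label j m + s_j(i) + 1, each s_j a permutation of {0, ..., m-1}.  Taking for
   s_0, ..., s_2t alternately the identity and its reversal, and for the last
   two layers the zigzag permutation (even i to m-1-i/2, odd i to
   floor(m/2)-1-floor(i/2)), makes the row sum R(i) of the labels of the copies of i take
   one value A on even i and another value B on odd i, with B < A < 2B.  In
   P_m[K_n-bar] the weight of (i, j) is R(i-1) + R(i+1), so along the path the
   weights read B, 2A, 2B, 2A, ..., ending in B for odd m and in A for even m:
   adjacent weights differ, and at most 3 (m odd) or 4 (m even) values occur.
   For m = 1 mod 4 this is better than the stated bound. *)

Set Implicit Arguments.
Unset Strict Implicit.
Unset Printing Implicit Defensive.

Lemma chi_ld_le_weights (T : finType) (e : rel T) (f : {ffun T -> 'I_#|T|})
    (s : seq nat) :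
  is_ldal e f -> (forall u, weight e f u \in s) -> chi_ld e <= size s.
Proof.
move=> ldal_f ws; apply: (@Order.TotalTheory.bigmin_inf _ nat _ _ f _ _ _ ldal_f).
apply: uniq_leq_size; first exact: undup_uniq.
by move=> w; rewrite mem_undup => /mapP [u _ ->].
Qed.

Lemma weight_lexprod_edgeless (T : finType) (e : rel T) n
    (f : {ffun T * 'I_n -> 'I_#|{: T * 'I_n}|}) (u : T * 'I_n) :
  weight (lexprod e (edgeless_rel n)) f u =
    \sum_(x | e u.1 x) \sum_(j < n) label f (x, j).
Proof.
rewrite pair_big /=; apply: eq_big => [x|[x j] _] //.
by rewrite /lexprod /edgeless_rel andbF orbF andbT.
Qed.

Lemma sum_ord_eq m a (F : nat -> nat) :
  \sum_(k < m | k == a :> nat) F k = (a < m) * F a.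
Proof.
case: ltnP => [lt_am | le_ma]; first by rewrite (big_pred1 (Ordinal lt_am)) ?mul1n.
rewrite big_pred0 // => k; apply/eqP => eq_ka.
by move: (ltn_ord k); rewrite eq_ka ltnNge le_ma.
Qed.

Definition path_nbr_sum m (F : nat -> nat) i := (0 < i) * F i.-1 + (i.+1 < m) * F i.+1.

Lemma sum_path_rel m (i : 'I_m) (F : nat -> nat) :
  \sum_(k | path_rel m i k) F k = path_nbr_sum m F i.
Proof.
rewrite /path_nbr_sum (bigID (fun k : 'I_m => k == i.-1 :> nat)) /= -sum_ord_eq.
case: (posnP i) => [i0 | i_gt0].
  rewrite i0 big_pred0 => [|k]; last by rewrite /path_rel i0; lia.
  by rewrite add0n; apply: eq_bigl => k; rewrite /path_rel i0; lia.
have lt_im : i.-1 < m := leq_ltn_trans (leq_pred i) (ltn_ord i).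
rewrite -[true]lt_im -sum_ord_eq.
by congr (_ + _); apply: eq_bigl => k; rewrite /path_rel; lia.
Qed.

Section LayeredLabeling.

Variables (m n : nat) (s : nat -> nat -> nat).
Hypothesis s_lt : forall j i, i < m -> s j i < m.
Hypothesis s_inj : forall j i i', i < m -> i' < m -> s j i = s j i' -> i = i'.

Lemma layered_index_lt (i : 'I_m) (j : 'I_n) : j * m + s j i < #|{: 'I_m * 'I_n}|.
Proof.
rewrite card_prod !card_ord mulnC.
by have := s_lt j (ltn_ord i); have := ltn_ord j; nia.
Qed.

Definition layered_labeling : {ffun 'I_m * 'I_n -> 'I_#|{: 'I_m * 'I_n}|} :=
  [ffun x => Ordinal (layered_index_lt x.1 x.2)].

Lemma label_layered x : label layered_labeling x = (x.2 * m + s x.2 x.1).+1.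
Proof. by rewrite /label ffunE. Qed.

Lemma layered_labeling_inj : injectiveb layered_labeling.
Proof.
apply/injectiveP => -[i j] [i' j'] /(congr1 val); rewrite !ffunE /= => eq_idx.
have lt_i := s_lt j (ltn_ord i); have lt_i' := s_lt j' (ltn_ord i').
have eq_j : j = j'.
  apply: val_inj; have m_gt0 : 0 < m by apply: leq_ltn_trans lt_i.
  by have := congr1 (divn^~ m) eq_idx; rewrite /= !divnMDl // !divn_small ?addn0.
subst j'; have eq_i : i = i'.
  exact/val_inj/(s_inj (ltn_ord i) (ltn_ord i'))/(addnI eq_idx).
by rewrite eq_i.
Qed.

Definition layered_row_sum r := \sum_(j < n) (j * m + s j r).+1.

Lemma weight_layered_path u :
  weight (lexprod (path_rel m) (edgeless_rel n)) layered_labeling u =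
    path_nbr_sum m layered_row_sum u.1.
Proof.
rewrite weight_lexprod_edgeless -sum_path_rel.
by apply: eq_bigr => i _; apply: eq_bigr => j _; rewrite label_layered.
Qed.

End LayeredLabeling.

Definition zigzag m i := if odd i then m./2 - i./2 - 1 else m.-1 - i./2.

Lemma zigzag_lt m i : i < m -> zigzag m i < m.
Proof. rewrite /zigzag; case: ifP; lia. Qed.

Lemma zigzag_inj m i i' : i < m -> i' < m -> zigzag m i = zigzag m i' -> i = i'.
Proof. rewrite /zigzag; do 2 case: ifP; lia. Qed.

Lemma addn_double_zigzag m i : i < m ->
  i + (zigzag m i).*2 = if odd i then (m./2).*2 - 1 else (m.-1).*2.
Proof. rewrite /zigzag; case: ifP; lia. Qed.

Definition layer m t j i :=
  if j <= t.*2 then (if odd j then m.-1 - i else i) else zigzag m i.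

Lemma layer_lt m t j i : i < m -> layer m t j i < m.
Proof. by rewrite /layer; case: ifP => _; [case: ifP => _; lia | apply: zigzag_lt]. Qed.

Lemma layer_inj m t j i i' :
  i < m -> i' < m -> layer m t j i = layer m t j i' -> i = i'.
Proof. by rewrite /layer; case: ifP => _; [case: ifP => _; lia | apply: zigzag_inj]. Qed.

Lemma sum_alternating m t i : i < m ->
  \sum_(j < t.*2.+1) (if odd j then m.-1 - i else i) = t * m.-1 + i.
Proof.
move=> lt_im; elim: t => [|t IHt]; first by rewrite big_ord1.
by rewrite doubleS 2!big_ord_recr /= IHt odd_double /=; lia.
Qed.

Lemma sum_layer m t i : i < m ->
  \sum_(j < t.*2.+3) layer m t j i = t * m.-1 + (i + (zigzag m i).*2).
Proof.
move=> lt_im; rewrite 2!big_ord_recr /= /layer ltnn ltnNge leqnSn /=.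
under eq_bigr => j _ do rewrite -ltnS ltn_ord.
by rewrite sum_alternating //; lia.
Qed.

Lemma row_sum_layer m t i : i < m ->
  layered_row_sum m t.*2.+3 (layer m t) i =
    \sum_(j < t.*2.+3) (j * m).+1 + t * m.-1
    + (if odd i then (m./2).*2 - 1 else (m.-1).*2).
Proof.
move=> lt_im; rewrite /layered_row_sum.
under eq_bigr => j _ do rewrite -addSn.
by rewrite big_split /= sum_layer // addn_double_zigzag // addnA.
Qed.

Section AlternatingPath.

Variables (m A B : nat) (R : nat -> nat).
Hypothesis m_gt2 : 2 < m.
Hypothesis R_alt : forall i, i < m -> R i = if odd i then B else A.
Hypothesis lt_BA : B < A.
Hypothesis lt_A_2B : A < B.*2.

Let w := path_nbr_sum m R.

Lemma nbr_sum_alternating i : i < m ->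
  w i = if i == 0 then B
        else if i.+1 == m then (if odd m then B else A)
        else if odd i then A.*2 else B.*2.
Proof.
rewrite /w /path_nbr_sum; case: i => [_ | k lt_km] /=.
  by rewrite mul0n add0n (ltnW m_gt2) mul1n R_alt // ltnW.
rewrite mul1n (R_alt (ltnW lt_km)).
move: lt_km; rewrite leq_eqVlt => /orP [/eqP <- | lt_k2m].
  by rewrite eqxx ltnn mul0n addn0 /= negbK.
by rewrite lt_k2m mul1n R_alt // ltn_eqF //=; case: (odd k); rewrite addnn.
Qed.

Lemma nbr_sum_alternating_neq i : i.+1 < m -> w i != w i.+1.
Proof.
move=> lt_i1m.
rewrite (nbr_sum_alternating (ltnW lt_i1m)) (nbr_sum_alternating lt_i1m).
by repeat case: ifP => ?; lia.
Qed.

Lemma nbr_sum_alternating_mem i : i < m ->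
  w i \in (if odd m then [:: B; A.*2; B.*2] else [:: A; B; A.*2; B.*2]).
Proof.
move=> lt_im; rewrite nbr_sum_alternating //.
by repeat case: ifP => _; rewrite !inE eqxx ?orbT.
Qed.

End AlternatingPath.

Lemma is_ldal_lexprod_path m n (f : {ffun 'I_m * 'I_n -> 'I_#|{: 'I_m * 'I_n}|})
    (w : nat -> nat) :
  injectiveb f ->
  (forall u, weight (lexprod (path_rel m) (edgeless_rel n)) f u = w u.1) ->
  (forall i, i.+1 < m -> w i != w i.+1) ->
  is_ldal (lexprod (path_rel m) (edgeless_rel n)) f.
Proof.
move=> inj_f weightE w_neq; rewrite /is_ldal inj_f.
apply/forallP => u; apply/forallP => v; apply/implyP.
rewrite /lexprod /edgeless_rel andbF orbF !weightE /path_rel.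
by case/orP => /eqP uv; rewrite -uv; [|rewrite eq_sym]; apply: w_neq; rewrite uv.
Qed.

Theorem mainTheorem11 (m n : nat) :
  odd n -> 1 < n -> 3 <= m ->
  chi_ld (lexprod (path_rel m) (edgeless_rel n)) <=
    (if odd m then (if m %% 4 == 1 then 4 else 3) else 4).
Proof.
move=> odd_n n_gt1 m_gt2.
have [t ->] : exists t, n = t.*2.+3 by exists (n - 3)./2; lia.
pose C := \sum_(j < t.*2.+3) (j * m).+1 + t * m.-1.
have C_ge3 : 3 <= C by rewrite /C 3!big_ord_recr /=; lia.
pose A := C + (m.-1).*2; pose B := C + ((m./2).*2 - 1).
have lt_BA : B < A by rewrite /A /B; lia.
have lt_A_2B : A < B.*2 by rewrite /A /B; lia.
pose R := layered_row_sum m t.*2.+3 (layer m t).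
have R_alt i : i < m -> R i = if odd i then B else A.
  by move=> lt_im; rewrite /R row_sum_layer //; case: ifP.
pose f := layered_labeling t.*2.+3 (@layer_lt m t).
have weightE u : weight (lexprod (path_rel m) (edgeless_rel t.*2.+3)) f u =
    path_nbr_sum m R u.1 := weight_layered_path _ u.
apply: (@leq_trans (size (if odd m then [:: B; A.*2; B.*2] else [:: A; B; A.*2; B.*2]))).
  apply: (@chi_ld_le_weights _ _ f) => [|u]; last first.
    by rewrite weightE; apply: nbr_sum_alternating_mem.
  apply: is_ldal_lexprod_path weightE _.
    exact: layered_labeling_inj _ (@layer_inj m t).
  exact: (nbr_sum_alternating_neq m_gt2 R_alt lt_BA lt_A_2B).
by case: (odd m); case: (m %% 4 == 1).
Qed.
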